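(* Let $k\ge-1$ and let $w_0:\mathbb{R}\to\mathbb{R}$ be the odd function with $w_0(x)=x$ for $x\in[0,1)$ and $w_0(x)=x^{k+1}$ for $x\ge1$. Let $p(t,y)=\frac{1}{\sqrt{4\pi t}}\int_{\mathbb{R}}e^{-\frac{(y-z)^2}{4t}}w_0(z)\,dz$ for $t>0$ (and $p(0,\cdot)=w_0$) be the solution of $p_t=p_{yy}$ on $(0,+\infty)\times\mathbb{R}$ with $p(0,\cdot)=w_0$. Then for every $t_0>0$ there exist constants $0<C_1<C_2$ such that $C_1y^{k+1}\le p(t,y)\le C_2y^{k+1}$ for all $t\in[0,t_0]$ and all $y\ge\max(\sqrt t,1)$. *)

From HB Require Import structures.
From mathcomp Require Import all_boot all_order all_algebra.
From mathcomp Require Import all_classical all_reals all_analysis.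
Set Implicit Arguments. Unset Strict Implicit. Unset Printing Implicit Defensive.
Import Order.TTheory GRing.Theory Num.Theory.
Import numFieldNormedType.Exports.
Local Open Scope classical_set_scope.
Local Open Scope ring_scope.

Definition w0_pos {R : realType} (k : R) (x : R) : R :=
  if x < 1 then x else x `^ (k + 1).

Definition w0 {R : realType} (k : R) (x : R) : R :=
  if 0 <= x then w0_pos k x else - w0_pos k (- x).

Definition heat_p {R : realType} (k : R) (t y : R) : R :=
  if t <= 0 then w0 k y
  else (Num.sqrt (4 * pi * t))^-1 *
       (\int[@lebesgue_measure R]_(z in [set: R])
          (expR (- ((y - z) ^+ 2) / (4 * t)) * w0 k z)).

(* Upper bound: for y >= 1, |w0 z| <= y^(k+1) e^((k+1)|z - y|), and the Gaussian
   G(u) = e^(-u^2/(4t)) absorbs the exponential at the price of doubling its variance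
   and a factor e^(2 t0 (k+1)^2); integrating against the normal density of variance
   4t gives p(t,y) <= sqrt 2 e^(2 t0 (k+1)^2) y^(k+1).
   Lower bound: w0 is odd and nonpositive on (-oo, 0], so folding the integral onto
   [0, +oo) gives the integrand (G(y-z) - G(y+z)) w0(z) >= 0.  On [y, y + sqrt t]
   we have (y-z)^2 <= t and (y+z)^2 >= 4y^2 >= 4t, so it is at least
   (e^(-1/4) - e^(-1)) y^(k+1); the length sqrt t of that interval cancels the
   sqrt t in the normalisation (4 pi t)^(-1/2). *)

From HB Require Import structures.
From mathcomp Require Import all_boot all_order all_algebra.
From mathcomp Require Import all_classical all_reals all_analysis.
From mathcomp Require Import ring lra measurable_realfun.
Set Implicit Arguments. Unset Strict Implicit. Unset Printing Implicit Defensive.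
Import Order.TTheory GRing.Theory Num.Theory.
Import numFieldNormedType.Exports.
Local Open Scope classical_set_scope.
Local Open Scope ring_scope.

Section RealInequalities.
Variable R : realType.
Implicit Types K t u x y : R.

Lemma powR_ge1 K y : 0 <= K -> 1 <= y -> 1 <= y `^ K.
Proof. by move=> K0 y1; rewrite -(powRr0 y) ler_powR. Qed.

Lemma normr_le_mul_expR_dist x y : 1 <= y -> `|x| <= y * expR `|x - y|.
Proof.
move=> y1.
have := ler_normD y (x - y); rewrite addrC subrK (ger0_norm (le_trans ler01 y1)).
have := expR_ge1Dx `|x - y|; have := normr_ge0 (x - y).
nra.
Qed.

Lemma mul_norm_le_sqr K t u : 0 < t -> K * `|u| <= 2 * t * K ^+ 2 + u ^+ 2 / (8 * t).
Proof.
move=> t_gt0.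
have : u ^+ 2 / (8 * t) * (8 * t) = `|u| ^+ 2.
  by rewrite divfK ?real_normK ?num_real //; lra.
move: (u ^+ 2 / (8 * t)) => q qE.
have := sqr_ge0 (4 * t * K - `|u|).
nra.
Qed.

End RealInequalities.

Definition powR_max1 {R : realType} (K x : R) : R := Num.max x 1 `^ K.

Section PowRMax1.
Variable R : realType.
Implicit Types K x : R.

Lemma powR_max1_le1 K x : x <= 1 -> powR_max1 K x = 1.
Proof. by move=> x1; rewrite /powR_max1 (max_idPr x1) powR1. Qed.

Lemma powR_max1_ge1 K x : 1 <= x -> powR_max1 K x = x `^ K.
Proof. by move=> x1; rewrite /powR_max1 (max_idPl x1). Qed.

Lemma continuous_powR_max1 K : continuous (powR_max1 K).
Proof.
have -> : powR_max1 K = fun x => expR (K * ln (Num.max x 1)).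
  apply/funext => x; rewrite /powR_max1 /powR gt_eqF //.
  by rewrite lt_max ltr01 orbT.
move=> x; apply: continuous_comp; last exact: continuous_expR.
apply: continuousM; first exact: cvg_cst.
apply: continuous_comp; first by apply: continuous_max; [exact: cvg_id | exact: cvg_cst].
by apply: continuous_ln; rewrite lt_max ltr01 orbT.
Qed.

End PowRMax1.

Section InitialDatum.
Variables (R : realType) (k : R).
Implicit Types x y : R.

Lemma w0_pos_ge0 x : 0 <= x -> 0 <= w0_pos k x.
Proof. by move=> x0; rewrite /w0_pos; case: ifP => // _; exact: powR_ge0. Qed.

Lemma w0_ge0 x : 0 <= x -> 0 <= w0 k x.
Proof. by move=> x0; rewrite /w0 x0 w0_pos_ge0. Qed.

Lemma w0N x : w0 k (- x) = - w0 k x.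
Proof.
rewrite /w0 oppr_ge0 opprK; case: (ltgtP x 0) => [x0|x0|->] //.
- by rewrite opprK.
- by rewrite oppr0 /w0_pos ltr01 oppr0.
Qed.

Lemma w0_le0 x : x <= 0 -> w0 k x <= 0.
Proof. by move=> x0; rewrite -(opprK x) w0N oppr_le0 w0_ge0 // oppr_ge0. Qed.

Lemma w0_ge1 x : 1 <= x -> w0 k x = x `^ (k + 1).
Proof. by move=> x1; rewrite /w0 (le_trans ler01 x1) /w0_pos ltNge x1. Qed.

Lemma normr_w0 x : `|w0 k x| = w0_pos k `|x|.
Proof.
rewrite /w0; case: leP => x0; first by rewrite ger0_norm ?w0_pos_ge0 // ger0_norm.
by rewrite normrN ger0_norm ?ltr0_norm // w0_pos_ge0 // oppr_ge0 ltW.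
Qed.

Lemma w0E x : w0 k x =
  powR_max1 (k + 1) x - powR_max1 (k + 1) (- x) + Num.max (-1) (Num.min x 1).
Proof.
have [x0|x0] := leP 0 x.
  rewrite /w0 x0 (@powR_max1_le1 _ _ (- x)) ?(le_trans _ ler01) ?oppr_le0 //.
  rewrite /w0_pos; case: (ltP x 1) => x1.
    by rewrite powR_max1_le1 ?ltW // subrr add0r (max_idPr _) //; lra.
  by rewrite powR_max1_ge1 // (max_idPr _) ?subrK //; lra.
rewrite /w0 ifN -?ltNge // powR_max1_le1 ?ltW ?(lt_trans x0) // (min_idPl _); last by lra.
rewrite /w0_pos; case: (ltP (- x) 1) => x1.
  by rewrite powR_max1_le1 ?ltW // subrr add0r (max_idPr _) ?opprK //; lra.
rewrite powR_max1_ge1 // (max_idPl _); last by lra.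
by rewrite addrAC subrr add0r.
Qed.

Lemma continuous_w0 : continuous (w0 k).
Proof.
have -> : w0 k = fun x =>
    powR_max1 (k + 1) x - powR_max1 (k + 1) (- x) + Num.max (-1) (Num.min x 1).
  by apply/funext => x; rewrite w0E.
move=> x; apply: (@continuousD _ _ _
    (fun x => powR_max1 (k + 1) x - powR_max1 (k + 1) (- x))
    (fun x => Num.max (-1) (Num.min x 1))).
  apply: (@continuousB _ _ _ (powR_max1 (k + 1)) (fun x => powR_max1 (k + 1) (- x))).
    exact: continuous_powR_max1.
  by apply: continuous_comp; [exact: continuousN cvg_id | exact: continuous_powR_max1].
apply: continuous_max; first exact: cvg_cst.
by apply: continuous_min; [exact: cvg_id | exact: cvg_cst].
Qed.

Lemma normr_w0_le x y : -1 <= k -> 1 <= y ->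
  `|w0 k x| <= y `^ (k + 1) * expR ((k + 1) * `|x - y|).
Proof.
move=> hk y1; have K0 : 0 <= k + 1 by lra.
rewrite normr_w0 [(k + 1) * _]mulrC expRM -powRM ?expR_ge0 ?(le_trans ler01) //.
have yE1 : 1 <= y * expR `|x - y|.
  by rewrite -[1]mulr1 ler_pM // -expR0 ler_expR.
rewrite /w0_pos; case: (ltP `|x| 1) => x1; first by rewrite (le_trans (ltW x1)) // powR_ge1.
apply: ge0_ler_powR; rewrite ?nnegrE ?normr_ge0 ?(le_trans ler01 yE1) //.
exact: normr_le_mul_expR_dist.
Qed.

End InitialDatum.

Definition heat_gauss {R : realType} (t u : R) : R := expR (- (u ^+ 2) / (4 * t)).

Section HeatGauss.
Variable R : realType.
Implicit Types K t u v : R.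

Lemma heat_gauss_le t u v : 0 < t -> u ^+ 2 <= v ^+ 2 -> heat_gauss t v <= heat_gauss t u.
Proof. by move=> t_gt0 uv; rewrite ler_expR ler_wpM2r ?invr_ge0 ?lerN2 //; lra. Qed.

Lemma heat_gauss_ge t u : 0 < t -> u ^+ 2 <= t -> expR (-1 / 4) <= heat_gauss t u.
Proof. by move=> t_gt0 ut; rewrite ler_expR ler_pdivlMr ?mulr_gt0 //; lra. Qed.

Lemma heat_gauss_le_expRN1 t u : 0 < t -> 4 * t <= u ^+ 2 -> heat_gauss t u <= expR (-1).
Proof. by move=> t_gt0 ut; rewrite ler_expR ler_pdivrMr ?mulr_gt0 //; lra. Qed.

Lemma heat_gauss_mul_expR_le t t0 K u : 0 < t -> t <= t0 ->
  heat_gauss t u * expR (K * `|u|) <= expR (2 * t0 * K ^+ 2) * expR (- (u ^+ 2) / (8 * t)).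
Proof.
move=> t_gt0 tt0; rewrite -!expRD ler_expR.
have := mul_norm_le_sqr K u t_gt0.
have : t * K ^+ 2 <= t0 * K ^+ 2 by rewrite ler_wpM2r ?sqr_ge0.
have -> : - u ^+ 2 / (4 * t) = - 2 * (u ^+ 2 / (8 * t)) by field; lra.
lra.
Qed.

End HeatGauss.

Section LebesgueIntegrals.
Variable R : realType.
Local Notation mu := (@lebesgue_measure R).
Implicit Types (f h : R -> R) (m s C : R).

Lemma integrable_scaled_normal_pdf m s C :
  mu.-integrable setT (EFin \o (fun z => C * normal_pdf m s z)).
Proof.
by apply: (eq_integrable _ _ _ _ (integrableZl measurableT C (integrable_normal_pdf m s))).
Qed.

Lemma integrable_le_normal_pdf f m s C : measurable_fun setT f ->
  (forall z, `|f z| <= C * normal_pdf m s z) -> mu.-integrable setT (EFin \o f).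
Proof.
move=> mf fle.
apply: (le_integrable _ _ _ (integrable_scaled_normal_pdf m s C)) => //.
  exact/measurable_EFinP.
by move=> z _ /=; rewrite lee_fin (le_trans (fle z)) // ler_norm.
Qed.

Lemma Rintegral_le_normal_pdf f m s C : measurable_fun setT f ->
  (forall z, `|f z| <= C * normal_pdf m s z) -> \int[mu]_(z in setT) f z <= C.
Proof.
move=> mf fle; have fi := integrable_le_normal_pdf mf fle.
apply: le_trans (ler_norm _) _.
apply: le_trans (le_normr_Rintegral measurableT fi) _.
have -> : C = \int[mu]_(z in setT) (C * normal_pdf m s z).
  by rewrite RintegralZl ?integrable_normal_pdf // /Rintegral integral_normal_pdf mulr1.
apply: le_Rintegral => //; first exact: integrable_norm.
exact: integrable_scaled_normal_pdf.
Qed.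

Lemma le0_integration_by_substitutionNy f a :
  {within `]-oo, - a], continuous f} -> {in `]-oo, - a], forall x, f x <= 0} ->
  (\int[mu]_(x in `]-oo, (- a)%R]) (f x)%:E =
   \int[mu]_(x in `[a, +oo[) ((f \o -%R) x)%:E)%E.
Proof.
move=> cf f_le0.
transitivity (- \int[mu]_(x in `]-oo, (- a)%R]) (- f x)%:E)%E.
  rewrite -integral_ge0N; last by move=> x xa; rewrite lee_fin oppr_ge0 f_le0.
  by apply: eq_integral => x _; rewrite EFinN oppeK.
rewrite ge0_integration_by_substitutionNy; first last.
- by move=> x; rewrite in_itv /= => /ltW xa; rewrite oppr_ge0 f_le0 // in_itv /= xa.
- by move=> x; apply: continuousN; exact: cf.
rewrite -integral_ge0N; last first.
  move=> x; rewrite /= in_itv /= andbT => xa.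
  by rewrite lee_fin oppr_ge0 f_le0 // in_itv /= lerN2.
by apply: eq_integral => x _; rewrite /= opprK.
Qed.

Lemma integrable_comp_oppr f : continuous f -> mu.-integrable setT (EFin \o f) ->
  mu.-integrable `[0, +oo[ (EFin \o (f \o -%R)).
Proof.
move=> cf fi; apply/integrableP; split.
  apply/measurable_EFinP; apply: measurable_funTS; apply: continuous_measurable_fun => x.
  by apply: continuous_comp; [exact: continuousN cvg_id | exact: cf].
have /integrableP[_] : mu.-integrable `]-oo, 0] (EFin \o f) by apply: integrableS fi.
apply: le_lt_trans; rewrite le_eqVlt; apply/predU1P; left.
symmetry; have := @ge0_integration_by_substitutionNy R (fun x => `|f x|) 0.
rewrite oppr0; apply => [|x _]; last exact: normr_ge0.
by apply: continuous_subspaceT => x; apply: cvg_norm; exact: cf.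
Qed.

Lemma integrable_fold f : continuous f -> mu.-integrable setT (EFin \o f) ->
  mu.-integrable `[0, +oo[ (EFin \o (fun x => f x + f (- x))).
Proof.
move=> cf fi.
have fi0 : mu.-integrable `[0, +oo[ (EFin \o f) by apply: integrableS fi.
by apply: (eq_integrable _ _ _ _ (integrableD _ fi0 (integrable_comp_oppr cf fi))).
Qed.

Lemma Rintegral_fold f : continuous f -> mu.-integrable setT (EFin \o f) ->
  (forall x, x <= 0 -> f x <= 0) ->
  \int[mu]_(x in setT) f x = \int[mu]_(x in `[0, +oo[) (f x + f (- x)).
Proof.
move=> cf fi f_le0.
have RE : [set: R] = `]-oo, 0%R[ `|` `[0%R, +oo[ by rewrite -setCitvl setUv.
rewrite RE Rintegral_setU //; last 2 first.
- by rewrite -RE.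
- by rewrite -setCitvl; apply/disj_setPCl.
rewrite RintegralD //; last 2 first.
- exact: integrableS fi.
- exact: integrable_comp_oppr.
rewrite addrC Rintegral_itv_bndo_bndc; last exact: integrableS fi.
congr (_ + _); rewrite /Rintegral; congr fine.
have := @le0_integration_by_substitutionNy f 0; rewrite oppr0; apply.
- exact: continuous_subspaceT.
- by move=> x; rewrite in_itv /= => x0; exact: f_le0.
Qed.

Lemma Rintegral_ge_cst_itv (D : set R) h (a b c : R) : measurable D -> a <= b ->
  `[a, b] `<=` D -> mu.-integrable D (EFin \o h) -> (forall x, D x -> 0 <= h x) ->
  0 <= c -> (forall x, a <= x <= b -> c <= h x) -> c * (b - a) <= \int[mu]_(x in D) h x.
Proof.
move=> mD ab abD hi h0 c0 hc.
have mh : measurable_fun D h by case/integrableP : hi => /measurable_EFinP.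
rewrite -lee_fin /Rintegral fineK; last exact: integrable_fin_num.
apply: le_trans (ge0_subset_integral mu _ _ _ _ abD) => //; last exact/measurable_EFinP.
have -> : ((c * (b - a))%:E = \int[mu]_(x in `[a, b]) (cst c%:E x))%E.
  rewrite integral_cst // EFinM; congr (_ * _)%E.
  have muab : lebesgue_measure (`[a, b] : set R) = (b - a)%:E.
    rewrite lebesgue_measure_itv /= lte_fin.
    move: ab; rewrite le_eqVlt => /predU1P[->|ab]; first by rewrite ltxx subrr.
    by rewrite ab EFinB.
  exact/esym/muab.
apply: ge0_le_integral => //.
by apply/measurable_EFinP; exact: measurable_funS mD abD mh.
Qed.

End LebesgueIntegrals.

Definition heat_integrand {R : realType} (k t y z : R) : R := heat_gauss t (y - z) * w0 k z.

Lemma normal_pdf_sqrt4t {R : realType} (m t z : R) : 0 < t ->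
  normal_pdf m (Num.sqrt (4 * t)) z =
  (Num.sqrt (8 * pi * t))^-1 * expR (- ((z - m) ^+ 2) / (8 * t)).
Proof.
move=> t_gt0; rewrite normal_pdfE; last by rewrite gt_eqF // sqrtr_gt0; lra.
rewrite /normal_peak /normal_fun sqr_sqrtr; last by lra.
have -> : 4 * t * pi *+ 2 = 8 * pi * t by rewrite -mulr_natr; ring.
by have -> : 4 * t *+ 2 = 8 * t by rewrite -mulr_natr; ring.
Qed.

Section HeatSolution.
Variables (R : realType) (k : R).
Local Notation mu := (@lebesgue_measure R).
Implicit Types t x y z : R.

Lemma heat_pE t y : 0 < t ->
  heat_p k t y = (Num.sqrt (4 * pi * t))^-1 * \int[mu]_(z in setT) heat_integrand k t y z.
Proof. by move=> t_gt0; rewrite /heat_p leNgt t_gt0. Qed.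

Lemma heat_p_initial t y : t <= 0 -> 1 <= y -> heat_p k t y = y `^ (k + 1).
Proof. by move=> t_le0 y1; rewrite /heat_p t_le0 w0_ge1. Qed.

Lemma continuous_heat_integrand t y : continuous (heat_integrand k t y).
Proof.
move=> z; rewrite /heat_integrand /heat_gauss.
apply: (@continuousM _ _ (fun z => expR (- ((y - z) ^+ 2) / (4 * t))) (w0 k)); last first.
  exact: continuous_w0.
apply: continuous_comp; last exact: continuous_expR.
apply: (@continuousM _ _ (fun z => - ((y - z) ^+ 2)) (fun=> (4 * t)^-1)); last exact: cvg_cst.
apply: continuousN.
by apply: (@continuousM _ _ (fun z => y - z) (fun z => y - z));
  apply: continuousB; (exact: cvg_cst || exact: cvg_id).
Qed.

Lemma measurable_heat_integrand t y : measurable_fun setT (heat_integrand k t y).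
Proof. by apply: continuous_measurable_fun; exact: continuous_heat_integrand. Qed.

Lemma heat_integrand_le0 t y z : z <= 0 -> heat_integrand k t y z <= 0.
Proof. by move=> z0; rewrite /heat_integrand mulr_ge0_le0 ?expR_ge0 ?w0_le0. Qed.

Lemma normr_heat_integrand_le t t0 y z : -1 <= k -> 0 < t -> t <= t0 -> 1 <= y ->
  `|heat_integrand k t y z| <=
  y `^ (k + 1) * expR (2 * t0 * (k + 1) ^+ 2) * Num.sqrt (8 * pi * t) *
  normal_pdf y (Num.sqrt (4 * t)) z.
Proof.
move=> hk t_gt0 tt0 y1.
rewrite normal_pdf_sqrt4t // mulrA mulfK; last first.
  by rewrite gt_eqF // sqrtr_gt0 !mulr_gt0 // pi_gt0.
rewrite /heat_integrand normrM ger0_norm ?expR_ge0 //.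
apply: le_trans (ler_wpM2l (expR_ge0 _) (normr_w0_le z hk y1)) _.
rewrite mulrCA -mulrA ler_wpM2l ?powR_ge0 // distrC -[(z - y) ^+ 2]sqrrN opprB.
exact: heat_gauss_mul_expR_le.
Qed.

Lemma integrable_heat_integrand t y : -1 <= k -> 0 < t -> 1 <= y ->
  mu.-integrable setT (EFin \o heat_integrand k t y).
Proof.
move=> hk t_gt0 y1; have mf := measurable_heat_integrand t y.
exact: integrable_le_normal_pdf mf (fun z => normr_heat_integrand_le z hk t_gt0 (lexx t) y1).
Qed.

Lemma heat_p_le t t0 y : -1 <= k -> 0 < t -> t <= t0 -> 1 <= y ->
  heat_p k t y <= 2 * expR (2 * t0 * (k + 1) ^+ 2) * y `^ (k + 1).
Proof.
move=> hk t_gt0 tt0 y1.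
have s_gt0 : 0 < Num.sqrt (4 * pi * t) by rewrite sqrtr_gt0 !mulr_gt0 // pi_gt0.
have mf := measurable_heat_integrand t y.
rewrite heat_pE //.
apply: le_trans (ler_wpM2l _ (Rintegral_le_normal_pdf mf
  (fun z => normr_heat_integrand_le z hk t_gt0 tt0 y1))) _.
  by rewrite invr_ge0 ltW.
rewrite (_ : 8 * pi * t = 2 * (4 * pi * t)); last by ring.
rewrite [Num.sqrt (2 * _)]sqrtrM ?ler0n //.
set s := Num.sqrt (4 * pi * t); set Y := y `^ _; set E := expR _.
have -> : s^-1 * (Y * E * (Num.sqrt 2 * s)) = Num.sqrt 2 * (E * Y) by field; rewrite gt_eqF.
rewrite -mulrA ler_wpM2r ?mulr_ge0 ?powR_ge0 ?expR_ge0 //.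
have := sqr_sqrtr (ler0n R 2); have := sqrtr_ge0 (2 : R); nra.
Qed.

Lemma heat_integrand_foldE t y x : heat_integrand k t y x + heat_integrand k t y (- x) =
  (heat_gauss t (y - x) - heat_gauss t (y + x)) * w0 k x.
Proof. by rewrite /heat_integrand w0N opprK mulrN mulrBl. Qed.

Lemma heat_integrand_fold_ge0 t y x : 0 < t -> 0 <= y -> 0 <= x ->
  0 <= heat_integrand k t y x + heat_integrand k t y (- x).
Proof.
move=> t_gt0 y0 x0; rewrite heat_integrand_foldE mulr_ge0 ?w0_ge0 // subr_ge0.
by apply: heat_gauss_le => //; nra.
Qed.

Lemma heat_integrand_fold_ge t y x : -1 <= k -> 0 < t -> 1 <= y -> Num.sqrt t <= y ->
  y <= x <= y + Num.sqrt t ->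
  (expR (-1 / 4) - expR (-1)) * y `^ (k + 1) <=
  heat_integrand k t y x + heat_integrand k t y (- x).
Proof.
move=> hk t_gt0 y1 ty /andP[yx xy]; rewrite heat_integrand_foldE.
have tE := sqr_sqrtr (ltW t_gt0); have st_ge0 := sqrtr_ge0 t.
apply: ler_pM.
- by rewrite subr_ge0 ler_expR; lra.
- exact: powR_ge0.
- by apply: lerB; [apply: heat_gauss_ge | apply: heat_gauss_le_expRN1] => //; nra.
- rewrite w0_ge1; last by lra.
  by apply: ge0_ler_powR; rewrite ?nnegrE; lra.
Qed.

Lemma heat_p_ge t y : -1 <= k -> 0 < t -> 1 <= y -> Num.sqrt t <= y ->
  (expR (-1 / 4) - expR (-1)) / (2 * Num.sqrt pi) * y `^ (k + 1) <= heat_p k t y.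
Proof.
move=> hk t_gt0 y1 ty.
have st_gt0 : 0 < Num.sqrt t by rewrite sqrtr_gt0.
have sp_gt0 : 0 < Num.sqrt (pi : R) by rewrite sqrtr_gt0 pi_gt0.
have c_ge0 : 0 <= (expR (-1 / 4) - expR (-1)) * y `^ (k + 1).
  by rewrite mulr_ge0 ?powR_ge0 // subr_ge0 ler_expR; lra.
have ci : continuous (heat_integrand k t y) by exact: continuous_heat_integrand.
have fi := integrable_heat_integrand hk t_gt0 y1.
have lb := Rintegral_ge_cst_itv (a := y) (b := y + Num.sqrt t)
  (measurable_itv `[0%R, +oo[) _ _ (integrable_fold ci fi) _ c_ge0
  (fun x => heat_integrand_fold_ge (x := x) hk t_gt0 y1 ty).
rewrite heat_pE // (Rintegral_fold ci fi (@heat_integrand_le0 t y)).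
have -> : Num.sqrt (4 * pi * t) = 2 * Num.sqrt pi * Num.sqrt t.
  rewrite !sqrtrM ?mulr_ge0 ?pi_ge0 //.
  by rewrite (_ : 4 = 2 ^+ 2) ?sqrtr_sqr ?ger0_norm //; ring.
apply: le_trans (ler_wpM2l _ (lb _ _ _)).
- by rewrite addrAC subrr add0r le_eqVlt; apply/predU1P; left; field; rewrite !gt_eqF.
- by rewrite invr_ge0 ltW // !mulr_gt0.
- by rewrite lerDl.
- by move=> x; rewrite /= !in_itv /= andbT => /andP[yx _]; lra.
- by move=> x; rewrite /= in_itv /= andbT => x0; apply: heat_integrand_fold_ge0 => //; lra.
Qed.

End HeatSolution.

Theorem lemma2p2 (R : realType) (k : R) (hk : -1 <= k) (t0 : R) (ht0 : 0 < t0) :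
  exists C1 C2 : R, 0 < C1 /\ C1 < C2 /\
    forall t y : R, 0 <= t -> t <= t0 -> Num.max (Num.sqrt t) 1 <= y ->
      C1 * y `^ (k + 1) <= heat_p k t y /\ heat_p k t y <= C2 * y `^ (k + 1).
Proof.
pose C1 := (expR (-1 / 4) - expR (-1)) / (2 * Num.sqrt (pi : R)).
pose E := expR (2 * t0 * (k + 1) ^+ 2).
have sqrt_pi_ge1 : 1 <= Num.sqrt (pi : R).
  have := sqr_sqrtr (@pi_ge0 R); have := @pi_ge2 R; have := sqrtr_ge0 (pi : R); nra.
have C1_gt0 : 0 < C1 by rewrite divr_gt0 ?subr_gt0 ?ltr_expR //; lra.
have C1_le1 : C1 <= 1.
  rewrite ler_pdivrMr ?mul1r; last by lra.
  have : expR (-1 / 4) <= 1 :> R by rewrite expR_le1; lra.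
  have := expR_gt0 (-1 : R); lra.
have E_ge1 : 1 <= E by rewrite -expR0 ler_expR mulr_ge0 ?sqr_ge0 //; lra.
exists C1, (2 * E); split => //; split; first lra.
move=> t y t_ge0 tt0; rewrite ge_max => /andP[ty y1].
have Y_ge1 : 1 <= y `^ (k + 1) by apply: powR_ge1 => //; lra.
have [t_gt0|t_le0] := ltP 0 t.
  by split; [exact: heat_p_ge | exact: heat_p_le tt0 _].
by rewrite heat_p_initial //; split; nra.
Qed.
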